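(* Let $F,\tilde F$ be finitely supported sequences on $\mathbb Z$ whose supports lie entirely to the left of the supports of finitely supported sequences $G,\tilde G$ (i.e. every index in the support of $F$ or $\tilde F$ is smaller than every index in the support of $G$ or $\tilde G$). Let $(a,b),(\tilde a,\tilde b),(c,d),(\tilde c,\tilde d)$ be the nonlinear Fourier series of $F,\tilde F,G,\tilde G$ respectively. Then $$\rho\bigl((a,b)(c,d),(\tilde a,\tilde b)(\tilde c,\tilde d)\bigr)\le 2\rho\bigl((a,b),(\tilde a,\tilde b)\bigr)+2\rho\bigl((c,d),(\tilde c,\tilde d)\bigr).$$
   Context: $\mathbb T$ is the unit circle, $\mathbb D$ the open unit disc, $\mathbb D^*=\{\overline z^{-1}:z\in\mathbb D\}$ (including $\infty$), and $a^*(z)=\overline{a(\overline z^{-1})}$ (so $a^*=\overline a$ on $\mathbb T$). $\int_{\mathbb T}a=\int_0^1a(e^{2\pi i\theta})d\theta$. $H^2(\mathbb D)$ is the space of $f\in L^2(\mathbb T)$ whose Fourier coefficients vanish at negative indices; $H^2(\mathbb D^* )$ is the space of $f$ with $f^*\in H^2(\mathbb D)$, and for such $f$, $f(\infty):=\overline{f^*(0)}=\int_{\mathbb T}f$. For a finitely supported $F$, its nonlinear Fourier series $(a,b)$ is the first row of the ordered product $\prod_k(1+|F_k|^2)^{-1/2}\begin{pmatrix}1&F_kz^k\\-\overline{F_k}z^{-k}&1\end{pmatrix}$ ($k$ increasing left to right). Pairs are multiplied as $(a,b)(c,d)=(ac-bd^*,ad+bc^* )$ (the first row of the product of the matrices $\begin{pmatrix}a&b\\-b^*&a^*\end{pmatrix}\begin{pmatrix}c&d\\-d^*&c^*\end{pmatrix}$).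 $\mathbf L$ is the set of pairs $(a,b)$ of measurable functions on $\mathbb T$ with $aa^*+bb^*=1$ a.e. on $\mathbb T$, $a\in H^2(\mathbb D^* )$ and $a(\infty)>0$; it carries the metric $\rho((a,b),(c,d))=\|a-c\|_{L^2(\mathbb T)}+\|b-d\|_{L^2(\mathbb T)}+|\log a(\infty)-\log c(\infty)|$. Nonlinear Fourier series of finitely supported sequences lie in $\mathbf L$. *)

From HB Require Import structures.
From mathcomp Require Import all_boot all_order all_algebra.
From mathcomp Require Import all_classical all_reals all_analysis.
From mathcomp Require Import complex.
Set Implicit Arguments. Unset Strict Implicit. Unset Printing Implicit Defensive.
Import Order.TTheory GRing.Theory Num.Theory.
Import numFieldNormedType.Exports.
Local Open Scope ring_scope.
Local Open Scope complex_scope.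

Section NLFT.
Variable R : realType.
Local Notation C := R[i].

Definition reC (x : C) : R := let: a +i* _ := x in a.
Definition imC (x : C) : R := let: _ +i* b := x in b.

Definition abs2 (x : C) : R := (reC x) ^+ 2 + (imC x) ^+ 2.

Definition supported_in (N : nat) (F : int -> C) : Prop :=
  forall k : int, (N < `|k|)%N -> F k = 0.

Definition supp_left (F G : int -> C) : Prop :=
  forall j k : int, F j <> 0 -> G k <> 0 -> j < k.

Definition nlft_factor (Fk : C) (k : int) (z : C) : 'M[C]_2 :=
  ((Num.sqrt (1 + abs2 Fk))^-1)%:C *:
    \matrix_(i < 2, j < 2)
      (if (i == 0) && (j == 0) then 1
       else if (i == 0) then Fk * z ^ k
       else if (j == 0) then - (conjc Fk) * z ^ (- k)
       else 1).

(* ordered product over k = -N, ..., N (k increasing from left to right);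
   factors with F_k = 0 are the identity, so this is the ordered product
   over the support whenever F is supported in [-N, N]. *)
Definition nlft_mat (N : nat) (F : int -> C) (z : C) : 'M[C]_2 :=
  \prod_(i < (N + N).+1) nlft_factor (F (i%:Z - N%:Z)) (i%:Z - N%:Z) z.

Definition nlft (N : nat) (F : int -> C) : (C -> C) * (C -> C) :=
  (fun z => nlft_mat N F z 0 0, fun z => nlft_mat N F z 0 1).

Definition fstar (f : C -> C) : C -> C := fun z => conjc (f (conjc z)^-1).

Definition pairmul (p q : (C -> C) * (C -> C)) : (C -> C) * (C -> C) :=
  let: (a, b) := p in let: (c, d) := q in
  (fun z => a z * c z - b z * fstar d z, fun z => a z * d z + b z * fstar c z).

Definition eT (t : R) : C := (cos (2 * pi * t)) +i* (sin (2 * pi * t)).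

Definition unit_interval : set R := [set t : R | 0 <= t <= 1].

Definition intT (f : C -> C) : C :=
  (\int[lebesgue_measure]_(t in unit_interval) reC (f (eT t))) +i*
  (\int[lebesgue_measure]_(t in unit_interval) imC (f (eT t))).

Definition L2T (f : C -> C) : R :=
  Num.sqrt (\int[lebesgue_measure]_(t in unit_interval) abs2 (f (eT t))).

(* a(infinity) := int_T a (a positive real number for elements of L) *)
Definition at_infty (a : C -> C) : C := intT a.

Definition rho (p q : (C -> C) * (C -> C)) : R :=
  let: (a, b) := p in let: (c, d) := q in
  L2T (fun z => a z - c z) + L2T (fun z => b z - d z)
  + `| ln (reC (at_infty a)) - ln (reC (at_infty c)) |.

End NLFT.

From HB Require Import structures.
From mathcomp Require Import all_boot all_order all_algebra.
From mathcomp Require Import all_classical all_reals all_analysis.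
From mathcomp Require Import complex.
From mathcomp Require Import ring lra zify.
Set Implicit Arguments. Unset Strict Implicit. Unset Printing Implicit Defensive.
Import Order.TTheory GRing.Theory Num.Theory.
Import numFieldNormedType.Exports.
Local Open Scope ring_scope.

(* On the circle the nonlinear Fourier series (a, b) of a finitely supported
   sequence is a pair of trigonometric polynomials with |a|^2 + |b|^2 = 1
   (each factor preserves the row norm), where a is the positive constant
   a(oo) plus negative frequencies and the frequencies of b lie between the
   extreme indices of the support.  If supp F lies to the left of supp G, the
   frequencies of b d^* are therefore negative, so the constant term of
   a c - b d^* is a(oo) c(oo) and the logarithmic part of rho splits into
   two.  For the L^2 parts write a c - a' c' = c (a - a') + a' (c - c') and
   similarly for b d^*: every entry has modulus at most 1, so Minkowski's
   inequality bounds the L^2 distance of each entry of the products by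
   |a - a'| + |b - b'| + |c - c'| + |d - d'|. *)

Section NLFTProductStability.
Variable R : realType.
Local Notation C := R[i].
Local Notation mu := (@lebesgue_measure R).
Local Open Scope complex_scope.

(** * Fourier modes on the circle *)

Lemma unit_intervalE : @unit_interval R = `[0, 1]%classic.
Proof. by apply/funext => t; apply/propext; rewrite /unit_interval /= in_itv. Qed.

Lemma periodic_intmul (f : R -> R) (T : R) (k : int) :
  periodic f T -> f (T * k%:~R) = f 0.
Proof.
move=> fT; rewrite mulrC; case: k => n.
  by rewrite -[RHS](periodicn fT n) add0r -mulr_natl.
by rewrite -(periodicn fT n.+1) NegzE mulrNz mulNr -mulr_natl addNr.
Qed.

Definition harmonic (w a b : R) (t : R) : R := a * cos (w * t) + b * sin (w * t).

Lemma is_derive_harmonic (w a b x : R) :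
  is_derive x 1 (harmonic w a b) (w * (b * cos (w * x) - a * sin (w * x))).
Proof.
have lin : is_derive x 1 (fun t : R => w * t) w.
  have := @is_deriveZ R R R^o id w x 1 1 (is_derive_id x 1).
  by rewrite [w *: _]mulr1.
have dcos := is_derive1_comp (is_derive_cos (w * x)) lin.
have dsin := is_derive1_comp (is_derive_sin (w * x)) lin.
have H : is_derive x 1 (harmonic w a b) _ :=
  is_deriveD (is_deriveM (is_derive_cst a x 1) dcos) (is_deriveM (is_derive_cst b x 1) dsin).
by apply: (is_derive_eq H); rewrite /cst /GRing.scale /=; ring.
Qed.

Lemma continuous_harmonic (w a b : R) : continuous (harmonic w a b).
Proof.
move=> x; apply/differentiable_continuous/derivable1_diffP.
by have [] := is_derive_harmonic w a b x.
Qed.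

Lemma harmonic_integral (k : int) (a b : R) (w := 2 * pi * k%:~R) :
  mu.-integrable `[0, 1] (EFin \o harmonic w a b) /\
  \int[mu]_(t in `[0, 1]) harmonic w a b t = if k == 0 then a else 0.
Proof.
split.
  apply: continuous_compact_integrable; first exact: segment_compact.
  exact/continuous_subspaceT/continuous_harmonic.
have [k0|k0] := eqVneq k 0.
  rewrite (@eq_Rintegral _ _ _ _ _ (cst a)); last first.
    by move=> t _; rewrite /harmonic /w k0 mulr0 mul0r cos0 sin0 mulr1 mulr0 addr0.
  by rewrite Rintegral_cst //= lebesgue_measure_itv /= lte_fin ltr01 /= subr0 mulr1.
have w0 : w != 0 by rewrite /w mulf_neq0 ?intr_eq0 // mulf_neq0 ?pnatr_eq0 ?gt_eqF ?pi_gt0.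
rewrite /Rintegral (@continuous_FTC2 _ _ (harmonic w (- b / w) (a / w))) ?ltr01 //.
- rewrite /harmonic /w !mulr1 !mulr0 mulr_natl.
  by rewrite (periodic_intmul _ (@cosD2pi R)) (periodic_intmul _ (@sinD2pi R)) -EFinB subrr.
- exact/continuous_subspaceT/continuous_harmonic.
- split.
  + by move=> x _; have [] := is_derive_harmonic w (- b / w) (a / w) x.
  + exact/cvg_at_right_filter/continuous_harmonic.
  + exact/cvg_at_left_filter/continuous_harmonic.
- move=> x _; rewrite derive1E; have [_ ->] := is_derive_harmonic w (- b / w) (a / w) x.
  by rewrite /harmonic; field.
Qed.

Lemma eTD (s t : R) : eT (s + t) = eT s * eT t :> C.
Proof. by rewrite /eT mulrDr cosD sinD /=; congr Complex; ring. Qed.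

Lemma eT0 : eT 0 = 1 :> C.
Proof. by rewrite /eT mulr0 cos0 sin0. Qed.

Lemma eTN (t : R) : eT (- t) = conjc (eT t) :> C.
Proof. by rewrite /eT mulrN cosN sinN. Qed.

Lemma eTV (t : R) : (eT t)^-1 = eT (- t) :> C.
Proof.
have eTK : eT t * eT (- t) = 1 :> C by rewrite -eTD subrr eT0.
have eT_neq0 : eT t != 0 :> C.
  by apply/eqP => eT0'; move/eqP: eTK; rewrite eT0' mul0r eq_sym oner_eq0.
by rewrite -[LHS]mulr1 -eTK mulKf.
Qed.

Lemma eTXn (t : R) (n : nat) : eT t ^+ n = eT (n%:R * t) :> C.
Proof.
elim: n => [|n IH]; first by rewrite mul0r eT0.
by rewrite exprS IH -eTD -natr1 mulrDl mul1r addrC.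
Qed.

Lemma eTX (t : R) (k : int) : eT t ^ k = eT (k%:~R * t) :> C.
Proof.
case: k => n; first exact: eTXn.
by rewrite (_ : eT t ^ Negz n = (eT t ^+ n.+1)^-1) // eTXn eTV NegzE mulrNz mulNr.
Qed.

Lemma eTXD (t : R) (k l : int) : eT t ^ (k + l) = eT t ^ k * eT t ^ l :> C.
Proof. by rewrite !eTX intrD mulrDl eTD. Qed.

Lemma conj_eTX (t : R) (k : int) : conjc (eT t ^ k) = eT t ^ (- k) :> C.
Proof. by rewrite !eTX -eTN intrN mulNr. Qed.

Lemma fstar_eT (f : C -> C) (t : R) : fstar f (eT t) = conjc (f (eT t)).
Proof. by rewrite /fstar -eTN eTV opprK. Qed.

Lemma reC_monomial (c : C) (k : int) (t : R) :
  reC (c * eT t ^ k) = harmonic (2 * pi * k%:~R) (reC c) (- imC c) t.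
Proof. by rewrite eTX /harmonic /eT !mulrA; case: c => x y /=; ring. Qed.

Lemma reCD (x y : C) : reC (x + y) = reC x + reC y. Proof. by case: x; case: y. Qed.

(** * Trigonometric polynomials *)

Definition mean (f : R -> R) : R := \int[mu]_(t in `[0, 1]) f t.

Definition tpeval (s : seq (C * int)) (t : R) : C := \sum_(x <- s) x.1 * eT t ^ x.2.

Definition freqs_in (A : pred int) (s : seq (C * int)) : bool := all (fun x => A x.2) s.

Definition tpshift (c : C) (k : int) (s : seq (C * int)) : seq (C * int) :=
  [seq (c * x.1, x.2 + k) | x <- s].

Definition tpmul (s1 s2 : seq (C * int)) : seq (C * int) :=
  flatten [seq tpshift x.1 x.2 s2 | x <- s1].

Definition tpconj (s : seq (C * int)) : seq (C * int) := [seq (conjc x.1, - x.2) | x <- s].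

Lemma tpeval_cat s1 s2 t : tpeval (s1 ++ s2) t = tpeval s1 t + tpeval s2 t.
Proof. exact: big_cat. Qed.

Lemma tpeval_cons c k s t : tpeval ((c, k) :: s) t = c * eT t ^ k + tpeval s t.
Proof. exact: big_cons. Qed.

Lemma tpeval_shift c k s t : tpeval (tpshift c k s) t = c * eT t ^ k * tpeval s t.
Proof.
rewrite /tpeval big_map mulr_sumr; apply: eq_bigr => x _ /=.
by rewrite eTXD; ring.
Qed.

Lemma tpeval_mul s1 s2 t : tpeval (tpmul s1 s2) t = tpeval s1 t * tpeval s2 t.
Proof.
elim: s1 => [|[c k] s1 IH]; first by rewrite /tpeval big_nil mul0r.
by rewrite /tpmul /= tpeval_cat -/(tpmul s1 s2) IH tpeval_shift tpeval_cons mulrDl.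
Qed.

Lemma tpeval_conj s t : tpeval (tpconj s) t = conjc (tpeval s t).
Proof.
rewrite /tpeval big_map rmorph_sum; apply: eq_bigr => x _ /=.
by rewrite rmorphM /= conj_eTX.
Qed.

Lemma freqs_in_cons A x s : freqs_in A (x :: s) = A x.2 && freqs_in A s.
Proof. by []. Qed.

Lemma freqs_in_cat A s1 s2 : freqs_in A (s1 ++ s2) = freqs_in A s1 && freqs_in A s2.
Proof. exact: all_cat. Qed.

Lemma freqs_in_shift (A B : pred int) c k s :
  (forall e, A e -> B (e + k)) -> freqs_in A s -> freqs_in B (tpshift c k s).
Proof. by move=> AB; rewrite /freqs_in all_map; apply: sub_all => x /AB. Qed.

Lemma freqs_in_mul (A B P : pred int) s1 s2 :
  (forall e1 e2, A e1 -> B e2 -> P (e2 + e1)) ->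
  freqs_in A s1 -> freqs_in B s2 -> freqs_in P (tpmul s1 s2).
Proof.
move=> ABP; elim: s1 => [|x s1 IH] // /andP[Ax As1] Bs2.
rewrite (_ : tpmul _ _ = tpshift x.1 x.2 s2 ++ tpmul s1 s2) // freqs_in_cat IH // andbT.
by apply: freqs_in_shift Bs2 => e /ABP; apply.
Qed.

Lemma freqs_in_conj (A B : pred int) s :
  (forall e, A e -> B (- e)) -> freqs_in A s -> freqs_in B (tpconj s).
Proof. by move=> AB; rewrite /freqs_in all_map; apply: sub_all => x /AB. Qed.

Lemma tpeval_integral s :
  mu.-integrable `[0, 1] (EFin \o (fun t => reC (tpeval s t))) /\
  mean (fun t => reC (tpeval s t)) = \sum_(x <- s | x.2 == 0) reC x.1.
Proof.
elim: s => [|[c k] s [IHi IHv]].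
  have -> : (fun t => reC (tpeval [::] t)) = cst 0 by apply/funext => t; rewrite /tpeval big_nil.
  by rewrite big_nil /mean Rintegral_cst // mul0r; split; first exact: integrable0.
have [hi hv] := harmonic_integral k (reC c) (- imC c).
have -> : (fun t => reC (tpeval ((c, k) :: s) t)) =
    (fun t => harmonic (2 * pi * k%:~R) (reC c) (- imC c) t + reC (tpeval s t)).
  by apply/funext => t; rewrite tpeval_cons reCD reC_monomial.
rewrite big_cons /mean RintegralD // hv -/(mean _) IHv; split; first exact: (integrableD _ hi IHi).
by case: eqP => // _; rewrite add0r.
Qed.

Lemma mean_const_add (c : R) s :
  freqs_in (fun e => e != 0) s -> mean (fun t => reC (c%:C + tpeval s t)) = c.
Proof.
move=> s_neq0; have [_] := tpeval_integral ((c%:C, 0) :: s).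
under eq_fun do rewrite tpeval_cons expr0z mulr1.
move=> ->; rewrite big_cons eqxx big_seq_cond big1 ?addr0 // => x /andP[xs x0].
by move: (allP s_neq0 x xs); rewrite x0.
Qed.

Definition trigpoly (u : R -> C) : Prop := exists s, forall t, u t = tpeval s t.

Lemma trigpoly_cst (c : C) : trigpoly (fun _ => c).
Proof. by exists [:: (c, 0)] => t; rewrite tpeval_cons expr0z mulr1 /tpeval big_nil addr0. Qed.

Lemma trigpolyD u v : trigpoly u -> trigpoly v -> trigpoly (fun t => u t + v t).
Proof. by move=> [s1 E1] [s2 E2]; exists (s1 ++ s2) => t; rewrite tpeval_cat E1 E2. Qed.

Lemma trigpolyM u v : trigpoly u -> trigpoly v -> trigpoly (fun t => u t * v t).
Proof. by move=> [s1 E1] [s2 E2]; exists (tpmul s1 s2) => t; rewrite tpeval_mul E1 E2. Qed.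

Lemma trigpolyJ u : trigpoly u -> trigpoly (fun t => conjc (u t)).
Proof. by move=> [s E]; exists (tpconj s) => t; rewrite tpeval_conj E. Qed.

Lemma trigpolyB u v : trigpoly u -> trigpoly v -> trigpoly (fun t => u t - v t).
Proof.
move=> tu tv; have [s E] := trigpolyM (trigpoly_cst (-1)) tv.
by apply: trigpolyD tu _; exists s => t; rewrite -E mulN1r.
Qed.

(** * The L^2 norm on the circle *)

Lemma abs2_ge0 (x : C) : 0 <= abs2 x.
Proof. by rewrite addr_ge0 ?sqr_ge0. Qed.

Lemma abs2E (x : C) : abs2 x = reC (x * conjc x).
Proof. by case: x => a b; rewrite /abs2 /=; ring. Qed.

Lemma trigpoly_abs2_integrable u :
  trigpoly u -> mu.-integrable `[0, 1] (EFin \o (fun t => abs2 (u t))).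
Proof.
move=> tu; have [s E] := trigpolyM tu (trigpolyJ tu).
have -> : (fun t => abs2 (u t)) = (fun t => reC (tpeval s t)).
  by apply/funext => t; rewrite abs2E E.
by have [] := tpeval_integral s.
Qed.

Definition sqnorm (u : R -> C) : R := mean (fun t => abs2 (u t)).

Definition norm2 (u : R -> C) : R := Num.sqrt (sqnorm u).

Lemma norm2_abs2 u v : (forall t, abs2 (u t) = abs2 (v t)) -> norm2 u = norm2 v.
Proof. by move=> uv; rewrite /norm2 /sqnorm (funext uv). Qed.

Lemma eq_norm2 u v : (forall t, u t = v t) -> norm2 u = norm2 v.
Proof. by move=> uv; apply: norm2_abs2 => t; rewrite uv. Qed.

Lemma abs2D_le (m : R) (x y : C) :
  0 < m -> abs2 (x + y) <= (1 + m) * abs2 x + (1 + m^-1) * abs2 y.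
Proof.
case: x y => a b [c d] m0; rewrite /abs2 /= -subr_ge0.
have -> : (1 + m) * (a ^+ 2 + b ^+ 2) + (1 + m^-1) * (c ^+ 2 + d ^+ 2)
          - ((a + c) ^+ 2 + (b + d) ^+ 2)
        = m^-1 * ((m * a - c) ^+ 2 + (m * b - d) ^+ 2) by field; rewrite gt_eqF.
by rewrite mulr_ge0 ?addr_ge0 ?sqr_ge0 // invr_ge0 ltW.
Qed.

(* The weights [(1 + m, 1 + 1/m)] with [m = c'/a'] give [(a' + c')^2]; the
   perturbation [a' = a + e/2], [c' = c + e/2] avoids dividing by zero. *)
Lemma sqrt_le_add_of_weighted (X a c : R) : 0 <= a -> 0 <= c ->
  (forall m, 0 < m -> X <= (1 + m) * a ^+ 2 + (1 + m^-1) * c ^+ 2) ->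
  Num.sqrt X <= a + c.
Proof.
move=> a0 c0 HX; apply/ler_addgt0Pr => e e0.
set a' := a + e / 2; set c' := c + e / 2.
have a'0 : 0 < a' by rewrite /a' ltr_pwDr ?divr_gt0.
have c'0 : 0 < c' by rewrite /c' ltr_pwDr ?divr_gt0.
have m0 : 0 < c' / a' by rewrite divr_gt0.
have -> : a + c + e = a' + c' by rewrite /a' /c' addrACA -splitr.
rewrite -(ger0_norm (ltW (addr_gt0 a'0 c'0))) -sqrtr_sqr ler_sqrt ?sqr_ge0 //.
have -> : (a' + c') ^+ 2 = (1 + c' / a') * a' ^+ 2 + (1 + (c' / a')^-1) * c' ^+ 2.
  by field; rewrite !gt_eqF.
apply: (le_trans (HX _ m0)); apply: lerD; apply: ler_wpM2l;
  rewrite ?addr_ge0 ?invr_ge0 ?(ltW m0) //; apply: lerXn2r;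
  by rewrite ?nnegrE ?(ltW a'0) ?(ltW c'0) // lerDl divr_ge0 ?(ltW e0).
Qed.

Lemma sqnorm_ge0 u : 0 <= sqnorm u.
Proof. by apply: Rintegral_ge0 => t _; exact: abs2_ge0. Qed.

Lemma norm2D_le u v :
  trigpoly u -> trigpoly v -> norm2 (fun t => u t + v t) <= norm2 u + norm2 v.
Proof.
move=> tu tv; apply: sqrt_le_add_of_weighted; rewrite ?sqrtr_ge0 // => m m0.
have iu := trigpoly_abs2_integrable tu; have iv := trigpoly_abs2_integrable tv.
have iZ k f : mu.-integrable `[0, 1] (EFin \o f) ->
    mu.-integrable `[0, 1] (EFin \o (fun t => k * f t)) by exact: integrableZl.
rewrite !sqr_sqrtr ?sqnorm_ge0 // /sqnorm /mean -!RintegralZl // -RintegralD ?iZ //.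
apply: le_Rintegral => //; first exact: trigpoly_abs2_integrable (trigpolyD tu tv).
  exact: integrableD (iZ _ _ iu) (iZ _ _ iv).
by move=> t _; exact: abs2D_le.
Qed.

Lemma norm2M_le h u : trigpoly h -> trigpoly u -> (forall t, abs2 (h t) <= 1) ->
  norm2 (fun t => h t * u t) <= norm2 u.
Proof.
move=> th tu h1; rewrite ler_sqrt ?sqnorm_ge0 //; apply: le_Rintegral => //.
- exact: trigpoly_abs2_integrable (trigpolyM th tu).
- exact: trigpoly_abs2_integrable.
- move=> t _; rewrite (_ : abs2 _ = abs2 (h t) * abs2 (u t)); last first.
    by case: (h t) (u t) => a b [c d]; rewrite /abs2 /=; ring.
  by rewrite ler_piMl ?abs2_ge0.
Qed.

Lemma abs2J (x : C) : abs2 (conjc x) = abs2 x.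
Proof. by case: x => a b; rewrite /abs2 /= sqrrN. Qed.

Lemma norm2J u : norm2 (fun t => conjc (u t)) = norm2 u.
Proof. by apply: norm2_abs2 => t; rewrite abs2J. Qed.

Lemma norm2JB u v :
  norm2 (fun t => conjc (u t) - conjc (v t)) = norm2 (fun t => u t - v t).
Proof. by rewrite -[RHS]norm2J; apply: eq_norm2 => t; rewrite rmorphB. Qed.

Lemma norm2N u : norm2 (fun t => - u t) = norm2 u.
Proof. by apply: norm2_abs2 => t; case: (u t) => x y; rewrite /abs2 /= !sqrrN. Qed.

Lemma norm2B_le u v :
  trigpoly u -> trigpoly v -> norm2 (fun t => u t - v t) <= norm2 u + norm2 v.
Proof.
move=> tu tv; rewrite -[norm2 v]norm2N.
have := norm2D_le tu (trigpolyB (trigpoly_cst 0) tv).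
by under eq_norm2 do rewrite sub0r; under [X in _ <= _ + X]eq_norm2 do rewrite sub0r.
Qed.

Lemma norm2_mulB_le u v u' v' :
  trigpoly u -> trigpoly v -> trigpoly u' -> trigpoly v' ->
  (forall t, abs2 (v t) <= 1) -> (forall t, abs2 (u' t) <= 1) ->
  norm2 (fun t => u t * v t - u' t * v' t)
  <= norm2 (fun t => u t - u' t) + norm2 (fun t => v t - v' t).
Proof.
move=> tu tv tu' tv' v1 u'1.
rewrite (eq_norm2 (v := fun t => v t * (u t - u' t) + u' t * (v t - v' t))); last by move=> t; ring.
apply: le_trans (norm2D_le (trigpolyM tv (trigpolyB tu tu')) (trigpolyM tu' (trigpolyB tv tv'))) _.
by apply: lerD; apply: norm2M_le => //; apply: trigpolyB.
Qed.

(** * The metric rho on products *)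

(* Elements of [L] whose entries restrict to trigonometric polynomials on the
   circle. *)
Definition L_trig (a b : C -> C) : Prop :=
  [/\ trigpoly (fun t => a (eT t)), trigpoly (fun t => b (eT t)),
      forall t, abs2 (a (eT t)) + abs2 (b (eT t)) = 1 & 0 < reC (at_infty a)].

Lemma L_trig_abs2_le1 a b : L_trig a b ->
  (forall t, abs2 (a (eT t)) <= 1) /\ (forall t, abs2 (b (eT t)) <= 1).
Proof.
case=> _ _ ab1 _; split => t; have := ab1 t;
  have := abs2_ge0 (a (eT t)); have := abs2_ge0 (b (eT t)); lra.
Qed.

Lemma rho_circle (a b a' b' : C -> C) : rho (a, b) (a', b') =
  norm2 (fun t => a (eT t) - a' (eT t)) + norm2 (fun t => b (eT t) - b' (eT t))
  + `|ln (reC (at_infty a)) - ln (reC (at_infty a'))|.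
Proof. by rewrite /rho /L2T unit_intervalE. Qed.

Lemma ln_mulB_le (x y x' y' : R) : 0 < x -> 0 < y -> 0 < x' -> 0 < y' ->
  `|ln (x * y) - ln (x' * y')| <= `|ln x - ln x'| + `|ln y - ln y'|.
Proof.
move=> x0 y0 x'0 y'0; rewrite !lnM ?posrE // opprD addrACA.
exact: ler_normD.
Qed.

Section ProductDistance.
Variables a b c d a' b' c' d' : C -> C.
Hypotheses (ab : L_trig a b) (cd : L_trig c d) (ab' : L_trig a' b') (cd' : L_trig c' d').

Let dist := norm2 (fun t => a (eT t) - a' (eT t)) + norm2 (fun t => b (eT t) - b' (eT t))
  + norm2 (fun t => c (eT t) - c' (eT t)) + norm2 (fun t => d (eT t) - d' (eT t)).

Lemma norm2_pairmul1B_le :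
  norm2 (fun t => a (eT t) * c (eT t) - b (eT t) * fstar d (eT t)
                  - (a' (eT t) * c' (eT t) - b' (eT t) * fstar d' (eT t))) <= dist.
Proof.
case: ab cd ab' cd' => [ta tb _ _] [tc td _ _] [ta' tb' _ _] [tc' td' _ _].
have [c1 d1] := L_trig_abs2_le1 cd; have [a'1 b'1] := L_trig_abs2_le1 ab'.
rewrite (eq_norm2 (v := fun t => (a (eT t) * c (eT t) - a' (eT t) * c' (eT t))
  - (b (eT t) * conjc (d (eT t)) - b' (eT t) * conjc (d' (eT t))))); last first.
  by move=> t; rewrite !fstar_eT; ring.
apply: le_trans (norm2B_le (trigpolyB (trigpolyM ta tc) (trigpolyM ta' tc'))
  (trigpolyB (trigpolyM tb (trigpolyJ td)) (trigpolyM tb' (trigpolyJ td')))) _.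
have := norm2_mulB_le ta tc ta' tc' c1 a'1.
have dJ1 t : abs2 (conjc (d (eT t))) <= 1 by rewrite abs2J.
have := norm2_mulB_le tb (trigpolyJ td) tb' (trigpolyJ td') dJ1 b'1.
rewrite norm2JB /dist; lra.
Qed.

Lemma norm2_pairmul2B_le :
  norm2 (fun t => a (eT t) * d (eT t) + b (eT t) * fstar c (eT t)
                  - (a' (eT t) * d' (eT t) + b' (eT t) * fstar c' (eT t))) <= dist.
Proof.
case: ab cd ab' cd' => [ta tb _ _] [tc td _ _] [ta' tb' _ _] [tc' td' _ _].
have [c1 d1] := L_trig_abs2_le1 cd; have [a'1 b'1] := L_trig_abs2_le1 ab'.
rewrite (eq_norm2 (v := fun t => (a (eT t) * d (eT t) - a' (eT t) * d' (eT t))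
  + (b (eT t) * conjc (c (eT t)) - b' (eT t) * conjc (c' (eT t))))); last first.
  by move=> t; rewrite !fstar_eT; ring.
apply: le_trans (norm2D_le (trigpolyB (trigpolyM ta td) (trigpolyM ta' td'))
  (trigpolyB (trigpolyM tb (trigpolyJ tc)) (trigpolyM tb' (trigpolyJ tc')))) _.
have := norm2_mulB_le ta td ta' td' d1 a'1.
have cJ1 t : abs2 (conjc (c (eT t))) <= 1 by rewrite abs2J.
have := norm2_mulB_le tb (trigpolyJ tc) tb' (trigpolyJ tc') cJ1 b'1.
rewrite norm2JB /dist; lra.
Qed.

Lemma rho_pairmul_le :
  reC (at_infty (fun z => a z * c z - b z * fstar d z)) = reC (at_infty a) * reC (at_infty c) ->
  reC (at_infty (fun z => a' z * c' z - b' z * fstar d' z))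
    = reC (at_infty a') * reC (at_infty c') ->
  rho (pairmul (a, b) (c, d)) (pairmul (a', b') (c', d'))
  <= 2 * rho (a, b) (a', b') + 2 * rho (c, d) (c', d').
Proof.
move=> mul_ac mul_ac'; rewrite !rho_circle mul_ac mul_ac'.
case: ab cd ab' cd' => [_ _ _ a0] [_ _ _ c0] [_ _ _ a'0] [_ _ _ c'0].
have := ln_mulB_le a0 c0 a'0 c'0.
have := normr_ge0 (ln (reC (at_infty a)) - ln (reC (at_infty a'))).
have := normr_ge0 (ln (reC (at_infty c)) - ln (reC (at_infty c'))).
have := norm2_pairmul1B_le; have := norm2_pairmul2B_le.
rewrite /dist; lra.
Qed.
End ProductDistance.

(** * Nonlinear Fourier series of finitely supported sequences *)

Definition nlft_scale (f : C) : R := (Num.sqrt (1 + abs2 f))^-1.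

Lemma nlft_scale_gt0 f : 0 < nlft_scale f.
Proof. by rewrite invr_gt0 sqrtr_gt0 ltr_pwDl ?abs2_ge0. Qed.

Lemma nlft_scale_sqr f : nlft_scale f ^+ 2 * (1 + abs2 f) = 1.
Proof.
have f0 : 0 < 1 + abs2 f by rewrite ltr_pwDl ?abs2_ge0.
by rewrite exprVn sqr_sqrtr ?ltW // mulVf ?gt_eqF.
Qed.

Lemma nlft_scale0 : nlft_scale 0 = 1.
Proof. by rewrite /nlft_scale /abs2 /= expr0n /= addr0 addr0 sqrtr1 invr1. Qed.

Lemma abs2_scale (r : R) (x : C) : abs2 (r%:C * x) = r ^+ 2 * abs2 x.
Proof. by case: x => a b; rewrite /abs2 /=; ring. Qed.

Lemma abs2_addC (x y : C) : (abs2 x + abs2 y)%:C = x * conjc x + y * conjc y.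
Proof. by case: x y => a b [c d]; rewrite /abs2 /=; congr Complex; ring. Qed.

(* The cross terms cancel, and [|w| = 1]. *)
Lemma abs2_rotate (x y f w : C) : w * conjc w = 1 ->
  abs2 (x - y * conjc f * conjc w) + abs2 (x * f * w + y)
  = (1 + abs2 f) * (abs2 x + abs2 y).
Proof.
move=> w1; apply: complexI; rewrite abs2_addC.
rewrite (_ : ((1 + abs2 f) * _)%:C = (1 + f * conjc f) * (x * conjc x + y * conjc y)); last first.
  by case: f x y => a b [c d] [g h]; rewrite /abs2 /=; congr Complex; ring.
rewrite !rmorphB !rmorphD !rmorphM /= !conjcK.
have -> : (x - y * conjc f * conjc w) * (conjc x - conjc y * f * w)
    + (x * f * w + y) * (conjc x * conjc f * conjc w + conjc y)
  = (1 + f * conjc f) * (x * conjc x + y * conjc y)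
    + f * conjc f * (x * conjc x + y * conjc y) * (w * conjc w - 1) by ring.
by rewrite w1 subrr mulr0 addr0.
Qed.

Lemma mulmx2E (A B : 'M[C]_2) i j : (A * B) i j = A i 0 * B 0 j + A i 1 * B 1 j.
Proof.
rewrite -mulmxE mxE big_ord_recl big_ord_recl big_ord0 addr0.
by have -> : lift ord0 (ord0 : 'I_1) = 1 :> 'I_2 by apply/val_inj.
Qed.

Definition nlft_partial (N : nat) (F : int -> C) (n : nat) (z : C) : 'M[C]_2 :=
  \prod_(i < n) nlft_factor (F (i%:Z - N%:Z)) (i%:Z - N%:Z) z.

Lemma nlft_partial_row (N : nat) (F : int -> C) (n : nat) (z : C)
    (k := n%:Z - N%:Z) (P := nlft_partial N F n z) :
  nlft_partial N F n.+1 z 0 0 = (nlft_scale (F k))%:C * (P 0 0 - P 0 1 * conjc (F k) * z ^ (- k))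
  /\ nlft_partial N F n.+1 z 0 1 = (nlft_scale (F k))%:C * (P 0 0 * F k * z ^ k + P 0 1).
Proof. by rewrite /nlft_partial big_ord_recr /= !mulmx2E !mxE /=; split; ring. Qed.

Lemma nlft_partial_unitary (N : nat) (F : int -> C) (n : nat) (t : R) :
  abs2 (nlft_partial N F n (eT t) 0 0) + abs2 (nlft_partial N F n (eT t) 0 1) = 1.
Proof.
elim: n => [|n IH].
  by rewrite /nlft_partial big_ord0 !mxE /abs2 /= expr0n expr1n /=; rewrite !addr0.
have [-> ->] := nlft_partial_row N F n (eT t).
rewrite !abs2_scale -mulrDr -conj_eTX abs2_rotate ?IH ?mulr1 ?nlft_scale_sqr //.
by rewrite conj_eTX -eTXD subrr expr0z.
Qed.

Definition spectral_form (A B : pred int) (a b : R -> C) : Prop :=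
  exists (al : R) (s1 s2 : seq (C * int)),
    [/\ 0 < al, freqs_in A s1, freqs_in B s2,
        forall t, a t = al%:C + tpeval s1 t & forall t, b t = tpeval s2 t].

Lemma spectral_form_sub (A B A' B' : pred int) a b :
  (forall e, A e -> A' e) -> (forall e, B e -> B' e) ->
  spectral_form A B a b -> spectral_form A' B' a b.
Proof.
move=> AA' BB' [al [s1 [s2 [al0 As1 Bs2 Ea Eb]]]]; exists al, s1, s2.
by split=> //; [apply: sub_all As1 => x /AA' | apply: sub_all Bs2 => x /BB'].
Qed.

Lemma spectral_form_trigpoly A B a b : spectral_form A B a b -> trigpoly a /\ trigpoly b.
Proof.
move=> [al [s1 [s2 [_ _ _ Ea Eb]]]]; split; last by exists s2.
by exists ((al%:C, 0) :: s1) => t; rewrite Ea tpeval_cons expr0z mulr1.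
Qed.

Lemma spectral_form_step (A B A' B' : pred int) (f : C) (k : int) a b :
  spectral_form A B a b ->
  (forall e, A e -> A' e) -> (forall e, B e -> A' (e - k)) ->
  (forall e, B e -> B' e) -> B' k -> (forall e, A e -> B' (e + k)) ->
  spectral_form A' B'
    (fun t => (nlft_scale f)%:C * (a t - b t * conjc f * eT t ^ (- k)))
    (fun t => (nlft_scale f)%:C * (a t * f * eT t ^ k + b t)).
Proof.
move=> [al [s1 [s2 [al0 As1 Bs2 Ea Eb]]]] AA' BA' BB' B'k AB'.
set s := nlft_scale f.
exists (s * al), (tpshift s%:C 0 s1 ++ tpshift (- s%:C * conjc f) (- k) s2),
  ((s%:C * al%:C * f, k) :: tpshift (s%:C * f) k s1 ++ tpshift s%:C 0 s2); split.
- by rewrite mulr_gt0 ?nlft_scale_gt0.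
- rewrite freqs_in_cat; apply/andP; split.
    by apply: freqs_in_shift As1 => e /AA'; rewrite addr0.
  exact: freqs_in_shift BA' Bs2.
- rewrite freqs_in_cons B'k andTb freqs_in_cat; apply/andP; split.
    exact: freqs_in_shift AB' As1.
  by apply: freqs_in_shift Bs2 => e /BB'; rewrite addr0.
- move=> t; rewrite Ea Eb tpeval_cat !tpeval_shift expr0z mulr1 rmorphM; ring.
- move=> t; rewrite Ea Eb tpeval_cons tpeval_cat !tpeval_shift expr0z; ring.
Qed.

Lemma nlft_partial_spectrum (N : nat) (F : int -> C) (r q : int) :
  (forall j, F j != 0 -> r <= j <= q) ->
  forall n, spectral_form (fun e => r - (n%:Z - N%:Z) < e < 0)
                          (fun e => (r <= e <= q) && (e < n%:Z - N%:Z))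
    (fun t => nlft_partial N F n (eT t) 0 0) (fun t => nlft_partial N F n (eT t) 0 1).
Proof.
move=> suppF; elim=> [|n IH].
  exists 1, [::], [::]; split=> // t;
    by rewrite /nlft_partial big_ord0 !mxE /tpeval big_nil ?addr0.
have row t := nlft_partial_row N F n (eT t).
rewrite (funext (fun t => (row t).1)) (funext (fun t => (row t).2)).
have [Fk0|/suppF Fk] := eqVneq (F (n%:Z - N%:Z)) 0.
  rewrite Fk0 conjc0 nlft_scale0 rmorph1.
  under [X in spectral_form _ _ X _]eq_fun do rewrite mulr0 mul0r subr0 mul1r.
  under [X in spectral_form _ _ _ X]eq_fun do rewrite mulr0 mul0r add0r mul1r.
  by apply: spectral_form_sub IH => *; lia.
by apply: (spectral_form_step _ IH) => *; lia.
Qed.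

Lemma supported_in_bounds (N : nat) (F : int -> C) (j : int) :
  supported_in N F -> F j != 0 -> - (N%:Z) <= j <= N%:Z.
Proof.
move=> sF Fj; have : ~ (N < `|j|)%N by move=> /sF Fj0; rewrite Fj0 eqxx in Fj.
lia.
Qed.

Lemma nlft_spectrum (N : nat) (F : int -> C) (r q : int) :
  (forall j, F j != 0 -> r <= j <= q) ->
  spectral_form (fun e => e < 0) (fun e => r <= e <= q)
    (fun t => nlft_mat N F (eT t) 0 0) (fun t => nlft_mat N F (eT t) 0 1).
Proof.
move=> suppF; have := nlft_partial_spectrum N suppF (N + N).+1.
by apply: spectral_form_sub => *; lia.
Qed.

Lemma reC_at_infty (a : C -> C) : reC (at_infty a) = mean (fun t => reC (a (eT t))).
Proof. by rewrite /at_infty /intT unit_intervalE. Qed.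

Lemma spectral_form_mean B a b : spectral_form (fun e => e < 0) B a b ->
  exists2 al, 0 < al & mean (fun t => reC (a t)) = al.
Proof.
case=> al [s1 [s2 [al0 As1 _ Ea _]]]; exists al => //.
under eq_fun do rewrite Ea.
by apply: mean_const_add; apply: sub_all As1 => x /ltr0_neq0.
Qed.

Lemma nlft_L_trig (N : nat) (F : int -> C) : supported_in N F ->
  L_trig (fun z => nlft_mat N F z 0 0) (fun z => nlft_mat N F z 0 1).
Proof.
move=> sF; have S := nlft_spectrum N (fun j => supported_in_bounds sF (j := j)).
have [ta tb] := spectral_form_trigpoly S.
split=> //; first by move=> t; exact: nlft_partial_unitary.
by rewrite reC_at_infty; have [al al0 ->] := spectral_form_mean S.
Qed.

Lemma supp_left_threshold (N : nat) (F G : int -> C) :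
  supported_in N F -> supported_in N G -> supp_left F G ->
  exists p : int, (forall j, F j != 0 -> - (N%:Z) <= j <= p)
               /\ (forall k, G k != 0 -> p + 1 <= k <= N%:Z).
Proof.
move=> sF sG FG.
have [[k0 Gk0]|G0] := pselect (exists k, G k != 0); last first.
  exists N; split=> [j /(supported_in_bounds sF) // | k Gk].
  by exfalso; apply: G0; exists k.
pose P n := G (n%:Z - N%:Z) != 0.
have Pk k : G k != 0 -> P (absz (k + N%:Z)).
  move=> Gk; have := supported_in_bounds sG Gk => kN.
  by rewrite /P gez0_abs ?addrK //; lia.
case: (ex_minnP (ex_intro P _ (Pk k0 Gk0))) => n Pn nmin.
exists (n%:Z - N%:Z - 1); split=> [j Fj | k Gk].
  have := supported_in_bounds sF Fj; have := FG j _ (elimN eqP Fj) (elimN eqP Pn); lia.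
have := supported_in_bounds sG Gk; have := nmin _ (Pk k Gk); lia.
Qed.

Lemma spectral_form_mean_mul (p : int) a b c d :
  spectral_form (fun e => e < 0) (fun e => e <= p) a b ->
  spectral_form (fun e => e < 0) (fun e => p < e) c d ->
  mean (fun t => reC (a t * c t - b t * conjc (d t)))
  = mean (fun t => reC (a t)) * mean (fun t => reC (c t)).
Proof.
move=> [al [s1 [s2 [_ As1 Bs2 Ea Eb]]]] [ga [s3 [s4 [_ As3 Bs4 Ec Ed]]]].
have neg_neq0 s : freqs_in (fun e => e < 0) s -> freqs_in (fun e => e != 0) s.
  by apply: sub_all => x /ltr0_neq0.
pose S := tpshift al%:C 0 s3 ++ tpshift ga%:C 0 s1 ++ tpmul s1 s3
          ++ tpshift (-1) 0 (tpmul s2 (tpconj s4)).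
have ES t : a t * c t - b t * conjc (d t) = (al * ga)%:C + tpeval S t.
  by rewrite Ea Eb Ec Ed !tpeval_cat !tpeval_shift !tpeval_mul tpeval_conj expr0z rmorphM; ring.
under eq_fun do rewrite ES.
under [X in _ = mean X * _]eq_fun do rewrite Ea.
under [X in _ = _ * mean X]eq_fun do rewrite Ec.
rewrite !mean_const_add ?neg_neq0 // !freqs_in_cat; apply/and4P; split.
- by apply: freqs_in_shift As3 => *; lia.
- by apply: freqs_in_shift As1 => *; lia.
- by apply: freqs_in_mul As1 As3 => *; lia.
have Js4 : freqs_in (fun e => e < - p) (tpconj s4) by apply: freqs_in_conj Bs4 => *; lia.
have Ms : freqs_in (fun e => e < 0) (tpmul s2 (tpconj s4)) by apply: freqs_in_mul Bs2 Js4 => *; lia.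
by apply: freqs_in_shift Ms => *; lia.
Qed.

Lemma nlft_at_infty_mul (N : nat) (F G : int -> C) :
  supported_in N F -> supported_in N G -> supp_left F G ->
  reC (at_infty (fun z => nlft_mat N F z 0 0 * nlft_mat N G z 0 0
                          - nlft_mat N F z 0 1 * fstar (fun z => nlft_mat N G z 0 1) z))
  = reC (at_infty (fun z => nlft_mat N F z 0 0)) * reC (at_infty (fun z => nlft_mat N G z 0 0)).
Proof.
move=> sF sG FG; have [p [Fp Gp]] := supp_left_threshold sF sG FG.
rewrite !reC_at_infty; under eq_fun do rewrite fstar_eT.
apply: (spectral_form_mean_mul (p := p)).
  by apply: spectral_form_sub (nlft_spectrum N Fp) => *; lia.
by apply: spectral_form_sub (nlft_spectrum N Gp) => *; lia.
Qed.
End NLFTProductStability.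

Theorem theorem6p1 (R : realType) (N : nat) (F Ft G Gt : int -> R[i]) :
  supported_in N F -> supported_in N Ft -> supported_in N G -> supported_in N Gt ->
  supp_left F G -> supp_left F Gt -> supp_left Ft G -> supp_left Ft Gt ->
  rho (pairmul (nlft N F) (nlft N G)) (pairmul (nlft N Ft) (nlft N Gt))
  <= 2 * rho (nlft N F) (nlft N Ft) + 2 * rho (nlft N G) (nlft N Gt).
Proof.
(* Only the pairs (F, G) and (Ft, Gt) are ever multiplied. *)
move=> sF sFt sG sGt FG _ _ FtGt.
apply: rho_pairmul_le; try exact: nlft_L_trig.
all: exact: nlft_at_infty_mul.
Qed.
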